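(* Let $X$ be a compact subanalytic subset of $\mathbb{R}^n$. Let $p\mapsto q_X(p)$ be any function $\mathbb{N}\to\mathbb{N}$ with $q_X(p)\ge p$ such that, for every $p$, every $f:X\to\mathbb{R}$ and every $q\ge q_X(p)$: if $\nabla^qf:\tau^q(X)\to\mathbb{R}$ then $f$ is the restriction of a $\mathcal{C}^p$ function on $\mathbb{R}^n$, and if moreover $a\in X$ and $\nabla^q_af=0$ then $f$ is the restriction of a $\mathcal{C}^p$ function on $\mathbb{R}^n$ that is $p$-flat at $a$. If $s\ge p$ and $q\ge q_X(s)$, then $$\mathcal{T}^s(X)_p\subset\tau^q(X)_p.$$
   Context: Notation. $\mathcal{P}_k$: real polynomials on $\mathbb{R}^n$ of degree $\le k$; $\mathcal{P}_k^*$ dual; $r_k=\dim\mathcal{P}_k$. For $\xi\in\mathcal{P}_k^*$, $b\in\mathbb{R}^n$, $|\alpha|\le k$: $\xi_\alpha(b):=\xi(\tfrac1{\alpha!}(x-b)^\alpha)$; $\delta_a(P)=P(a)$. A bundle over $X$ with fibres in $W$ is a subset of $X\times W$ with linear-subspace fibres. $p$-flat at $a$: all partial derivatives of order $\le p$ vanish at $a$. $T^p_aF$ is the Taylor polynomial of order $p$ of $F$ at $a$. Paratangent bundle of order $k$: for a bundle $E\subset X\times\mathcal{P}_k^*$, $\Delta E=\{(a,b,\xi+\eta):a,b\in X,\xi\in E_a,\eta\in E_b,|a-b|^{k-|\alpha|}|\eta_\alpha(b)|\le1\ \forall|\alpha|\le k\}$, $E'=\{(a,\xi):(a,a,\xi)\in\overline{\Delta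 E}\}$, $\rho(E)=\{(a,\xi):\xi\in\operatorname{Span}E'_a\}$; with $E_0=\{(a,\lambda\delta_a)\}$, $\tau^k(X):=\rho^{2r_k}(E_0)$ (the iterates are constant from $2r_k$ on). For $f:X\to\mathbb{R}$ and bundles $\Phi\subset X\times(\mathcal{P}_k^*\times\mathbb{R})$: $\Delta\Phi=\{(a,b,\xi+\eta,\lambda+\mu):(\xi,\lambda)\in\Phi_a,(\eta,\mu)\in\Phi_b,|a-b|^{k-|\alpha|}|\eta_\alpha(b)|\le1\ \forall|\alpha|\le k\}$, $\Phi'=\{(a,\xi,\lambda):(a,a,\xi,\lambda)\in\overline{\Delta\Phi}\}$, $\rho(\Phi)$ fibrewise span of $\Phi'$; $\nabla^kf:=\rho^{2(r_k+1)}(\Phi_0)$ with $\Phi_0=\{(a,\lambda\delta_a,\lambda f(a))\}$. ''$\nabla^kf:\tau^k(X)\to\mathbb{R}$'' means each $\xi\in\tau^k_a(X)$ has exactly one $\lambda$ with $(a,\xi,\lambda)\in\nabla^kf$, written $\nabla^k_af(\xi)$; ''$\nabla^k_af=0$'' means it is $0$ for all $\xi\in\tau^k_a(X)$. For $q\ge p$ and $a\in\mathbb{R}^n$, $\pi_a:\mathcal{P}_q\to\mathcal{P}_p$ truncates $\sum_{|\beta|\le q}c_\beta(x-a)^\beta$ to $\sum_{|\beta|\le p}c_\beta(x-a)^\beta$ and $\iota_a(\xi)=\xi\circ\pi_a$. $\tau^q(X)_p$ has fibres $\iota_a^{-1}(\tau^q_a(X))\subset\mathcal{P}_p^*$. $I^s(X)$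 is the ideal of $\mathcal{C}^s$ functions on $\mathbb{R}^n$ vanishing on $X$. For $s\ge p$, $\mathcal{T}^s(X)_p$ is the bundle over $X$ with fibre $\mathcal{T}^s_a(X)_p=\{\xi\in\mathcal{P}_p^*:\xi(T^p_ah)=0\text{ for all }h\in I^s(X)\}$. *)

From HB Require Import structures.
From mathcomp Require Import all_boot all_order all_algebra.
From mathcomp Require Import all_classical all_reals all_analysis.
Set Implicit Arguments. Unset Strict Implicit. Unset Printing Implicit Defensive.
Import Order.TTheory GRing.Theory Num.Theory.
Import numFieldNormedType.Exports.
Local Open Scope classical_set_scope.
Local Open Scope ring_scope.

Definition midx (n k : nat) :=
  {a : {ffun 'I_n -> 'I_k.+1} | (\sum_(i < n) (a i : nat) <= k)%N}.

Definition mval n k (a : midx n k) : 'I_n -> nat := fun i => (val a i : nat).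
Definition mdeg n (a : 'I_n -> nat) : nat := (\sum_(i < n) a i)%N.
Definition mle n (a b : 'I_n -> nat) : bool := [forall i, (a i <= b i)%N].
Definition msub n (a b : 'I_n -> nat) : 'I_n -> nat := fun i => (a i - b i)%N.
Definition mfact n (a : 'I_n -> nat) : nat := (\prod_(i < n) (a i)`!)%N.
Definition mbinom n (a b : 'I_n -> nat) : nat := (\prod_(i < n) 'C(a i, b i))%N.

Section Poly.
Variables (R : realType) (n : nat).
Local Notation pt := 'rV[R]_n.

Definition mono (x : pt) (a : 'I_n -> nat) : R := \prod_(i < n) (x 0 i) ^+ (a i).

Definition enorm d (v : 'rV[R]_d) : R := Num.sqrt (\sum_(i < d) (v 0 i) ^+ 2).

(* P_k is modelled by coefficient vectors midx n k -> R in the monomial basis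
   x^beta; P_k^* is modelled by (midx n k -> R), xi |-> (xi(x^beta))_beta,
   which is a linear isomorphism onto the dual. *)
Definition dual (k : nat) := midx n k -> R.

(* xi applied to the polynomial  sum_alpha d_alpha (x-b)^alpha  (|alpha| <= k) *)
Definition pair_at k (xi : dual k) (b : pt) (d : midx n k -> R) : R :=
  \sum_(al : midx n k) d al *
    \sum_(be : midx n k)
       (if mle (mval be) (mval al)
        then xi be * (mbinom (mval al) (mval be))%:R * mono (- b) (msub (mval al) (mval be))
        else 0).

(* xi_alpha(b) = xi((x-b)^alpha / alpha!) *)
Definition xi_at k (xi : dual k) (b : pt) (al : midx n k) : R :=
  pair_at xi b (fun be => if be == al then ((mfact (mval al))%:R)^-1 else 0).

Definition delta k (a : pt) : dual k := fun be => mono a (mval be).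

Definition dscale k (t : R) (xi : dual k) : dual k := fun be => t * xi be.
Definition dadd k (xi eta : dual k) : dual k := fun be => xi be + eta be.

Definition bundle k := pt -> set (dual k).

Definition DeltaE (X : set pt) k (E : bundle k) : pt -> pt -> set (dual k) :=
  fun a b z => X a /\ X b /\ exists xi eta, E a xi /\ E b eta /\ z = dadd xi eta /\
     forall al : midx n k,
       (enorm (a - b)) ^+ (k - mdeg (mval al)) * `|xi_at eta b al| <= 1.

(* (a, a, xi) in the closure of Delta E in R^n x R^n x P_k^* *)
Definition Eprime (X : set pt) k (E : bundle k) : bundle k :=
  fun a xi => forall eps : R, 0 < eps ->
    exists a' b' z, DeltaE X E a' b' z /\ enorm (a' - a) < eps /\ enorm (b' - a) < eps /\
      forall be, `|z be - xi be| < eps.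

Definition in_span k (S : set (dual k)) (xi : dual k) : Prop :=
  exists m (c : 'I_m -> R) (w : 'I_m -> dual k),
      (forall i, S (w i)) /\ xi = (fun be => \sum_(i < m) c i * w i be).

Definition rhoE (X : set pt) k (E : bundle k) : bundle k :=
  fun a xi => X a /\ in_span (Eprime X E a) xi.

Definition E0 (X : set pt) k : bundle k :=
  fun a xi => X a /\ exists t : R, xi = dscale t (delta a : dual k).

Definition rdim k : nat := #|{: midx n k}|.

Definition tau (X : set pt) k : bundle k := iter (2 * rdim k) (@rhoE X k) (@E0 X k).

Definition fbundle k := pt -> dual k -> R -> Prop.

Definition DeltaPhi (X : set pt) k (P : fbundle k) : pt -> pt -> dual k -> R -> Prop :=
  fun a b z nu => X a /\ X b /\ exists xi la eta mu,
     P a xi la /\ P b eta mu /\ z = dadd xi eta /\ nu = la + mu /\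
     forall al : midx n k,
       (enorm (a - b)) ^+ (k - mdeg (mval al)) * `|xi_at eta b al| <= 1.

Definition Phiprime (X : set pt) k (P : fbundle k) : fbundle k :=
  fun a xi la => forall eps : R, 0 < eps ->
    exists a' b' z nu, DeltaPhi X P a' b' z nu /\ enorm (a' - a) < eps /\
      enorm (b' - a) < eps /\ `|nu - la| < eps /\
      forall be, `|z be - xi be| < eps.

Definition in_span2 k (S : dual k -> R -> Prop) (xi : dual k) (la : R) : Prop :=
  exists m (c : 'I_m -> R) (w : 'I_m -> dual k) (l : 'I_m -> R),
      (forall i, S (w i) (l i)) /\ xi = (fun be => \sum_(i < m) c i * w i be) /\
      la = \sum_(i < m) c i * l i.

Definition rhoPhi (X : set pt) k (P : fbundle k) : fbundle k :=
  fun a xi la => X a /\ in_span2 (Phiprime X P a) xi la.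

Definition Phi0 (X : set pt) (f : pt -> R) k : fbundle k :=
  fun a xi la => X a /\ exists t : R, xi = dscale t (delta a : dual k) /\ la = t * f a.

Definition nabla (X : set pt) k (f : pt -> R) : fbundle k :=
  iter (2 * (rdim k).+1) (@rhoPhi X k) (@Phi0 X f k).

Definition nabla_is_fun (X : set pt) k (f : pt -> R) : Prop :=
  forall a, X a -> forall xi, @tau X k a xi ->
    exists! la : R, @nabla X k f a xi la.

Definition nabla_zero_at (X : set pt) k (f : pt -> R) (a : pt) : Prop :=
  forall xi, @tau X k a xi -> forall la, @nabla X k f a xi la -> la = 0.

Definition pderiv (i : 'I_n) (g : pt -> R) : pt -> R :=
  fun x => derive g x (delta_mx 0 i : pt).

Definition partials (l : seq 'I_n) (g : pt -> R) : pt -> R := foldr pderiv g l.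

Definition Cs (s : nat) (g : pt -> R) : Prop :=
  forall l : seq 'I_n, (size l <= s)%N ->
    continuous (partials l g) /\
    ((size l < s)%N -> forall (i : 'I_n) (x : pt), derivable (partials l g) x (delta_mx 0 i)).

Definition flat (p : nat) (g : pt -> R) (a : pt) : Prop :=
  forall l : seq 'I_n, (size l <= p)%N -> partials l g a = 0.

Definition mseq (al : 'I_n -> nat) : seq 'I_n :=
  flatten [seq nseq (al i) i | i <- enum 'I_n].

Definition dalpha (al : 'I_n -> nat) (g : pt -> R) (a : pt) : R := partials (mseq al) g a.

(* xi(T^p_a g) where T^p_a g = sum_{|alpha|<=p} d^alpha g(a)/alpha! (x-a)^alpha *)
Definition xi_taylor p (xi : dual p) (a : pt) (g : pt -> R) : R :=
  pair_at xi a (fun al => dalpha (mval al) g a / (mfact (mval al))%:R).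

Definition Tcal (X : set pt) (s p : nat) : bundle p :=
  fun a xi => X a /\ forall h : pt -> R, Cs s h -> (forall x, X x -> h x = 0) ->
     xi_taylor xi a h = 0.

(* iota_a : P_p^* -> P_q^*, xi |-> xi o pi_a ;
   pi_a(x^beta) = sum_{alpha <= beta, |alpha| <= p} C(beta,alpha) a^(beta-alpha) (x-a)^alpha *)
Definition iota p q (a : pt) (xi : dual p) : dual q :=
  fun be => pair_at xi a (fun al : midx n p =>
     if mle (mval al) (mval be)
     then (mbinom (mval be) (mval al))%:R * mono a (msub (mval be) (mval al))
     else 0).

Definition tau_p (X : set pt) (q p : nat) : bundle p :=
  fun a xi => @tau X q a (@iota p q a xi).

End Poly.
Arguments tau {R n} X k _ _.
Arguments nabla {R n} X k f _ _ _.
Arguments nabla_is_fun {R n} X k f.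
Arguments nabla_zero_at {R n} X k f a.
Arguments Tcal {R n} X s p _ _.
Arguments tau_p {R n} X q p _ _.
Arguments iota {R n} p q a xi _.
Arguments Cs {R n} s g.
Arguments flat {R n} p g a.

Section Analytic.
Variable R : realType.

Definition analytic_on d (U : set 'rV[R]_d) (f : 'rV[R]_d -> R) : Prop :=
  forall x0, U x0 -> exists r : R, 0 < r /\
    exists c : ('I_d -> nat) -> R, forall x, enorm (x - x0) < r ->
      (exists M : R, forall N : nat,
         \sum_(al : midx d N) `|c (mval al) * mono (x - x0) (mval al)| <= M) /\
      ((fun N : nat => \sum_(al : midx d N) c (mval al) * mono (x - x0) (mval al))
         @ \oo --> f x).

Definition semianalytic d (S : set 'rV[R]_d) : Prop :=
  forall x : 'rV[R]_d, exists U : set 'rV[R]_d, open U /\ U x /\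
    exists (m : nat) (f : 'I_m -> 'rV[R]_d -> R) (g : 'I_m -> seq ('rV[R]_d -> R)),
      (forall j, analytic_on U (f j)) /\ (forall j h, h \in g j -> analytic_on U h) /\
      S `&` U = (fun y => U y /\ exists j, f j y = 0 /\ forall h, h \in g j -> 0 < h y).

Definition subanalytic n (X : set 'rV[R]_n) : Prop :=
  forall x : 'rV[R]_n, exists U : set 'rV[R]_n, open U /\ U x /\
    exists (m : nat) (A : set 'rV[R]_(n + m)),
      semianalytic A /\ compact (closure A) /\
      X `&` U = [set lsubmx y | y in A].

End Analytic.

(* Suppose iota_a(xi) is not in tau^q_a(X).  That fibre is a linear span, so a
   linear form on P_q^* separates them: a polynomial P of degree <= q with
   eta(P) = 0 for every eta in tau^q_a(X) and iota_a(xi)(P) = xi(T^p_a P) <> 0.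
   Every bundle built from Phi_0(P) by the operations rho stays inside the graph
   of the continuous linear form eta |-> eta(P), while every bundle built from
   E_0 lifts into it; hence nabla^q P is the function eta |-> eta(P) on
   tau^q(X) and nabla^q_a P = 0.  The extension hypothesis then gives F in C^s,
   s-flat at a, equal to P on X, so P - F lies in I^s(X) and has the same
   Taylor polynomial of order p <= s at a as P: xi(T^p_a(P - F)) <> 0
   contradicts xi in T^s(X)_p. *)

From Pilot Require Import Defs.
From HB Require Import structures.
From mathcomp Require Import all_boot all_order all_algebra.
From mathcomp Require Import all_classical all_reals all_analysis.
From mathcomp Require Import ring lra.
Import Order.TTheory GRing.Theory Num.Theory.
Import numFieldNormedType.Exports.
Local Open Scope classical_set_scope.
Local Open Scope ring_scope.
Set Implicit Arguments. Unset Strict Implicit. Unset Printing Implicit Defensive.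

Section PolynomialFunctions.
Variables (R : realType) (n : nat).
Local Notation pt := 'rV[R]_n.

Definition polyfun (I : finType) (c : I -> R) (e : I -> 'I_n -> nat) : pt -> R :=
  fun x => \sum_k c k * mono x (e k).

Lemma is_derive_along_line (f : pt -> R) (x v : pt) (phi : R -> R) (d : R) :
  (forall h, f (h *: v + x) = phi h) -> is_derive (0 : R) 1 phi d -> is_derive x v f d.
Proof.
move=> f_phi [dphi <-].
have phiE : (fun h : R => f (h *: v + x)) = phi by apply/funext.
have f0 : f x = phi 0 by rewrite -f_phi scale0r add0r.
split; first by apply/derivable1P; rewrite phiE.
rewrite /derive.
have -> : (fun h : R => h^-1 *: ((f \o shift x) (h *: v) - f x)) =
          (fun h : R => h^-1 *: ((phi \o shift 0) (h *: 1) - phi 0)).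
  by apply/funext => h /=; rewrite f_phi f0 addr0 [h *: 1]mulr1.
by [].
Qed.

(* The truncated exponent [m i - 1] is harmless: when [m i = 0] the factor
   [(m i)%:R] vanishes. *)
Lemma is_derive_mono (x : pt) (i : 'I_n) (m : 'I_n -> nat) :
  is_derive x (delta_mx 0 i) (fun y => mono y m)
    ((m i)%:R * mono x (fun j => m j - (i == j))%N).
Proof.
pose K := \prod_(j < n | j != i) x 0 j ^+ m j.
apply: (@is_derive_along_line _ _ _ ((@idfun R + cst (x 0 i)) ^+ m i * cst K)).
  move=> h; rewrite /mono (bigD1 i) //= !fctE !mxE !eqxx mulr1; congr (_ * _).
  by apply: eq_bigr => j ji; rewrite !mxE !eqxx andTb (negbTE ji) mulr0 add0r.
apply: is_derive_eq.
rewrite /mono (bigD1 i) //= eqxx subn1 !fctE add0r scaler0 !add0r addr0.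
have -> : \prod_(j < n | j != i) x 0 j ^+ (m j - (i == j)) = K.
  by apply: eq_bigr => j ji; rewrite eq_sym (negbTE ji) subn0.
by rewrite [_%:A]mulr1 [_ *: _]mulrC mulrA.
Qed.

Lemma is_derive_polyfun (I : finType) (c : I -> R) (e : I -> 'I_n -> nat)
    (x v : pt) (d : I -> R) :
  (forall k, is_derive x v (fun y => mono y (e k)) (d k)) ->
  is_derive x v (polyfun c e) (\sum_k c k * d k).
Proof.
move=> de; rewrite /polyfun -fct_sumE.
elim/big_ind2 : _ => [|f1 d1 f2 d2|k _]; first exact: is_derive_cst.
  exact: is_deriveD.
exact: (@is_deriveZ R pt R _ (c k) x v _ (de k)).
Qed.

Lemma pderiv_polyfun (I : finType) (c : I -> R) (e : I -> 'I_n -> nat) (i : 'I_n) :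
  pderiv i (polyfun c e) =
  polyfun (fun k => c k * (e k i)%:R) (fun k j => e k j - (i == j))%N.
Proof.
apply/funext => x; rewrite /pderiv.
rewrite (@derive_val _ _ _ _ _ _ _ (is_derive_polyfun c (fun k => is_derive_mono x i (e k)))).
by apply: eq_bigr => k _; rewrite mulrA.
Qed.

Lemma partials_polyfun (I : finType) (c : I -> R) (e : I -> 'I_n -> nat)
    (l : seq 'I_n) :
  partials l (polyfun c e) =
  polyfun (fun k => c k * (\prod_j e k j ^_ count_mem j l)%:R)
          (fun k j => e k j - count_mem j l)%N.
Proof.
elim: l => [|i l IHl] /=.
  rewrite /polyfun; apply/funext => x; apply: eq_bigr => k _.
  by rewrite big1 // mulr1; congr (_ * mono x _); apply/funext => j; rewrite subn0.
rewrite IHl pderiv_polyfun /polyfun; apply/funext => x; apply: eq_bigr => k _.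
congr (_ * mono x _); last by apply/funext => j; rewrite -subnDA addnC.
rewrite -mulrA -natrM; congr (_ * _%:R).
rewrite (bigD1 i) //= [RHS](bigD1 i) //= eqxx add1n ffactnSr mulnAC.
by congr (_ * _)%N; apply: eq_bigr => j ji; rewrite eq_sym (negbTE ji).
Qed.

Lemma continuous_mono (m : 'I_n -> nat) : continuous (fun y : pt => mono y m).
Proof.
rewrite /mono -fct_prodE.
elim/big_ind : _ => [|f g cf cg y|j _ y]; first exact: cst_continuous.
  exact: continuousM (cf y) (cg y).
exact: (continuous_comp (@coord_continuous _ _ _ 0 j y) (@exprn_continuous _ _ _)).
Qed.

Lemma continuous_polyfun (I : finType) (c : I -> R) (e : I -> 'I_n -> nat) :
  continuous (polyfun c e).
Proof.
rewrite /polyfun -fct_sumE.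
elim/big_ind : _ => [|f g cf cg y|k _ y]; first exact: cst_continuous.
  exact: continuousD (cf y) (cg y).
by apply: continuousM; [exact: cst_continuous | exact: continuous_mono].
Qed.

Lemma Cs_polyfun (I : finType) (c : I -> R) (e : I -> 'I_n -> nat) (s : nat) :
  Cs s (polyfun c e).
Proof.
move=> l _; rewrite partials_polyfun; split; first exact: continuous_polyfun.
move=> _ i x.
exact: (@ex_derive _ _ _ _ _ _ _ (is_derive_polyfun _ (fun k => is_derive_mono x i _))).
Qed.
End PolynomialFunctions.

Section TaylorPolynomials.
Variables (R : realType) (n : nat).
Local Notation pt := 'rV[R]_n.

Lemma partialsB (s : nat) (g h : pt -> R) (l : seq 'I_n) :
  Cs s g -> Cs s h -> (size l <= s)%N ->
  partials l (g \- h) = partials l g \- partials l h.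
Proof.
move=> Cg Ch; elim: l => [|i l IHl] //= ls.
have ls' : (size l <= s)%N := ltnW ls.
rewrite IHl //; apply/funext => x.
exact: deriveB ((Cg l ls').2 ls i x) ((Ch l ls').2 ls i x).
Qed.

Lemma CsB (s : nat) (g h : pt -> R) : Cs s g -> Cs s h -> Cs s (g \- h).
Proof.
move=> Cg Ch l ls; rewrite (partialsB Cg Ch ls); split.
  by move=> x; apply: continuousB; [exact: (Cg l ls).1 | exact: (Ch l ls).1].
by move=> lt_ls i x; apply: derivableB; [exact: (Cg l ls).2 | exact: (Ch l ls).2].
Qed.

Lemma count_mseq (al : 'I_n -> nat) (j : 'I_n) : count_mem j (mseq al) = al j.
Proof.
rewrite /mseq count_flatten sumnE !big_map -enumT big_enum /=.
rewrite (bigD1 j) //= count_nseq /= eqxx mul1n big1 ?addn0 // => i ij.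
by rewrite count_nseq /= (negbTE ij).
Qed.

Lemma size_mseq (al : 'I_n -> nat) : size (mseq al) = mdeg al.
Proof.
rewrite /mseq size_flatten /shape sumnE -map_comp !big_map -enumT big_enum /=.
by apply: eq_bigr => i _; rewrite /= size_nseq.
Qed.

Lemma dalpha_polyfun (I : finType) (c : I -> R) (e : I -> 'I_n -> nat)
    (al : 'I_n -> nat) (a : pt) :
  dalpha al (polyfun c e) a =
  \sum_k c k * (mbinom (e k) al * mfact al)%:R * mono a (msub (e k) al).
Proof.
rewrite /dalpha partials_polyfun; apply: eq_bigr => k _.
congr (_ * _%:R * mono a _); last by apply/funext => j; rewrite count_mseq.
rewrite -big_split /=; apply: eq_bigr => j _.
by rewrite count_mseq bin_ffact.
Qed.

Lemma flat_xi_taylorB (s p : nat) (xi : dual R n p) (a : pt) (g F : pt -> R) :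
  (p <= s)%N -> Cs s g -> Cs s F -> flat s F a ->
  xi_taylor xi a (g \- F) = xi_taylor xi a g.
Proof.
move=> ps Cg CF flF; rewrite /xi_taylor; congr pair_at; apply/funext => al.
have ls : (size (mseq (mval al)) <= s)%N.
  by rewrite size_mseq; exact: leq_trans (valP al) ps.
by rewrite /dalpha (partialsB Cg CF ls) /= flF ?subr0.
Qed.

Lemma mbinom_small (al be : 'I_n -> nat) : ~~ mle al be -> mbinom be al = 0%N.
Proof.
move=> /forallPn [i lt_bi]; rewrite /mbinom (bigD1 i) //= bin_small ?mul0n //.
by rewrite ltnNge.
Qed.

Lemma mfact_gt0 (al : 'I_n -> nat) : (0 < mfact al)%N.
Proof. by apply/prodn_gt0 => i; exact: fact_gt0. Qed.

Lemma xi_taylor_polyfun (p q : nat) (xi : dual R n p) (a : pt) (c : midx n q -> R) :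
  xi_taylor xi a (polyfun c (fun b => mval b)) = \sum_b Defs.iota p q a xi b * c b.
Proof.
rewrite /xi_taylor /Defs.iota /pair_at.
under [RHS]eq_bigr => b _ do rewrite mulr_suml.
rewrite exchange_big /=; apply: eq_bigr => al _.
rewrite dalpha_polyfun !mulr_suml; apply: eq_bigr => b _.
have fact_neq0 : (mfact (mval al))%:R != 0 :> R by rewrite pnatr_eq0 -lt0n mfact_gt0.
case: ifP => [_|/negbT/mbinom_small ->]; last by rewrite mul0n mulr0 !mul0r.
by rewrite natrM; field.
Qed.
End TaylorPolynomials.

Section Separation.
Variables (K : fieldType) (I : finType).
Local Notation N := #|{: I}|.

Definition rowvec (w : I -> K) : 'rV[K]_N := \row_j w (enum_val j).

Lemma rowvec_enum_rank (w : I -> K) (i : I) : rowvec w 0 (enum_rank i) = w i.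
Proof. by rewrite mxE enum_rankK. Qed.

Lemma rowvec_mulmx (w : I -> K) (m : nat) (M : 'M[K]_(N, m)) (j : 'I_m) :
  (rowvec w *m M) 0 j = \sum_i w i * M (enum_rank i) j.
Proof.
rewrite mxE (big_enum_val (A := {: I})) /=.
by apply: eq_bigr => k _; rewrite mxE enum_valK.
Qed.

Definition rows_in (S : set (I -> K)) r (A : 'M[K]_(r, N)) : Prop :=
  forall k, exists2 w, S w & row k A = rowvec w.

Lemma exists_spanning_rows (S : set (I -> K)) :
  exists r (A : 'M[K]_(r, N)), rows_in S A /\ forall w, S w -> (rowvec w <= A)%MS.
Proof.
pose full_rank_rows r := `[< exists A : 'M[K]_(r, N), rows_in S A /\ \rank A = r >].
have ex0 : exists r, full_rank_rows r.
  by exists 0%N; apply/asboolP; exists 0; split; [case | rewrite mxrank0].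
have ub r : full_rank_rows r -> (r <= N)%N.
  by move=> /asboolP [A [_ <-]]; exact: rank_leq_col.
case: (ex_maxnP ex0 ub) => r /asboolP [A [rowsA rkA]] maxr.
exists r, A; split => // w Sw; apply/negPn/negP => wNA.
suff : (r + 1 <= r)%N by rewrite addn1 ltnn.
apply: maxr; apply/asboolP; exists (col_mx A (rowvec w)); split.
  move=> k; rewrite -[k]splitK; case: (fintype.split k) => k' /=.
    by rewrite rowKu; exact: rowsA.
  by rewrite rowKd; exists w => //; apply/matrixP => i j; rewrite !mxE.
apply/eqP; rewrite eqn_leq rank_leq_row /= [X in (X <= _)%N]addn1 -{1}rkA.
apply: rank_ltmx; rewrite ltmxE col_mx_sub (negbTE wNA) andbF andbT.
by rewrite -addsmxE addsmxSl.
Qed.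

Lemma separate_from_span (S : set (I -> K)) (v : I -> K) :
  ~ (exists m (c : 'I_m -> K) (w : 'I_m -> I -> K),
       (forall i, S (w i)) /\ v = (fun be => \sum_(i < m) c i * w i be)) ->
  exists c : I -> K, (forall w, S w -> \sum_i w i * c i = 0) /\ \sum_i v i * c i != 0.
Proof.
move=> vNspan; have [r [A [rowsA spanA]]] := exists_spanning_rows S.
have vNA : ~~ (rowvec v <= A)%MS.
  apply/negP => /submxP [u vE]; apply: vNspan.
  exists r, (u 0), (fun k i => A k (enum_rank i)); split.
    move=> k; have [w Sw rowkE] := rowsA k.
    suff -> : (fun i => A k (enum_rank i)) = w by [].
    by apply/funext => i; rewrite -rowvec_enum_rank -rowkE mxE.
  apply/funext => i; rewrite -rowvec_enum_rank vE mxE.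
  by apply: eq_bigr.
have /matrix0Pn [i0 [j vj]] : rowvec v *m cokermx A != 0 by rewrite -submxE.
exists (fun i => cokermx A (enum_rank i) j); split; last by rewrite -rowvec_mulmx -(ord1 i0).
move=> w /spanA; rewrite submxE => /eqP wA0.
by rewrite -rowvec_mulmx wA0 mxE.
Qed.
End Separation.

Section Iterates.
Variables (R : realType) (n : nat) (X : set 'rV[R]_n) (k : nat).
Local Notation pt := 'rV[R]_n.
Local Notation zero := (fun _ => 0 : R).

Lemma rdim_gt0 : (0 < rdim n k)%N.
Proof.
pose z : {ffun 'I_n -> 'I_k.+1} := [ffun=> ord0].
have deg0 : (\sum_(i < n) (z i : nat) <= k)%N by rewrite big1 // => i _; rewrite ffunE.
by apply/card_gt0P; exists (exist _ z deg0).
Qed.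

Lemma tau_rhoE :
  tau X k = rhoE X (iter (2 * rdim n k).-1 (@rhoE R n X k) (@E0 R n X k)).
Proof. by rewrite /tau -[in LHS](prednK (_ : 0 < 2 * rdim n k)%N) ?muln_gt0 ?rdim_gt0. Qed.

Lemma xi_at_zero (b : pt) (al : midx n k) : xi_at (zero : dual R n k) b al = 0.
Proof.
rewrite /xi_at /pair_at big1 // => al' _; rewrite big1 ?mulr0 // => be _.
by case: ifP; rewrite ?mul0r.
Qed.

Lemma enorm_subrr (a : pt) : enorm (a - a) = 0.
Proof. by rewrite subrr /enorm big1 ?sqrtr0 // => i _; rewrite mxE expr0n. Qed.

Lemma rhoPhi_inflationary (Phi : fbundle R n k) :
  (forall a, X a -> Phi a zero 0) ->
  forall a xi la, X a -> Phi a xi la -> rhoPhi X Phi a xi la.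
Proof.
move=> Phi_zero a xi la Xa Phi_a; split => //.
exists 1%N, (fun _ => 1), (fun _ => xi), (fun _ => la).
split; last by split; [apply/funext => be|]; rewrite big_ord1 mul1r.
move=> _ eps eps0; exists a, a, xi, la; split.
  split => //; split => //; exists xi, la, zero, 0.
  do 2 (split; first exact: Phi_zero || exact: Phi_a).
  split; first by apply/funext => be; rewrite /Defs.dadd addr0.
  by split; [rewrite addr0 | move=> al; rewrite xi_at_zero normr0 mulr0].
rewrite enorm_subrr subrr normr0; do 3 (split => //).
by move=> be; rewrite subrr normr0.
Qed.

Lemma iter_rhoPhi_zero (f : pt -> R) m a :
  X a -> iter m (@rhoPhi R n X k) (@Phi0 R n X f k) a zero 0.
Proof.
move=> Xa; case: m => [|m] /=.
  split => //; exists 0; split; last by rewrite mul0r.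
  by apply/funext => be; rewrite /Defs.dscale mul0r.
split => //; exists 0%N, (fun _ => 0), (fun _ => zero), (fun _ => 0).
by split; [case | split; [apply/funext => be|]; rewrite big_ord0].
Qed.

Lemma iter_rhoPhi_mono (f : pt -> R) m m' a xi la : (m <= m')%N -> X a ->
  iter m (@rhoPhi R n X k) (@Phi0 R n X f k) a xi la ->
  iter m' (@rhoPhi R n X k) (@Phi0 R n X f k) a xi la.
Proof.
move=> /subnK <- Xa; elim: (m' - m)%N => [//|d IHd] Phi_m.
rewrite addSn /=; apply: rhoPhi_inflationary => //; last exact: IHd.
by move=> b Xb; exact: iter_rhoPhi_zero.
Qed.
End Iterates.

Section NablaPolynomial.
Variables (R : realType) (n : nat) (X : set 'rV[R]_n) (q : nat) (c : midx n q -> R).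
Local Notation pt := 'rV[R]_n.
Local Notation P := (polyfun c (fun b => mval b)).
Local Notation cnorm := (\sum_b `|c b|).

Definition dual_eval (xi : dual R n q) : R := \sum_b xi b * c b.

Lemma dual_evalD (xi eta : dual R n q) :
  dual_eval (Defs.dadd xi eta) = dual_eval xi + dual_eval eta.
Proof. by rewrite /dual_eval -big_split; apply: eq_bigr => b _; rewrite mulrDl. Qed.

Lemma dual_eval_lincomb m (cc : 'I_m -> R) (w : 'I_m -> dual R n q) :
  dual_eval (fun be => \sum_(i < m) cc i * w i be) = \sum_(i < m) cc i * dual_eval (w i).
Proof.
rewrite /dual_eval; under eq_bigr => b _ do rewrite mulr_suml.
rewrite exchange_big /=; apply: eq_bigr => i _.
by rewrite mulr_sumr; apply: eq_bigr => b _; rewrite mulrA.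
Qed.

Lemma dual_eval_delta (t : R) (x : pt) :
  dual_eval (Defs.dscale t (delta x)) = t * P x.
Proof.
rewrite /dual_eval /polyfun mulr_sumr; apply: eq_bigr => b _.
by rewrite /Defs.dscale /delta -mulrA [mono _ _ * _]mulrC.
Qed.

Lemma dual_eval_near (z xi : dual R n q) (eps : R) :
  (forall be, `|z be - xi be| < eps) ->
  `|dual_eval z - dual_eval xi| <= cnorm * eps.
Proof.
move=> z_xi; rewrite /dual_eval -sumrB mulr_suml.
apply: le_trans (ler_norm_sum _ _ _) _; apply: ler_sum => b _.
by rewrite -mulrBl normrM mulrC ler_wpM2l // ltW.
Qed.

Lemma Phiprime_graph (Phi : fbundle R n q) :
  (forall a xi la, Phi a xi la -> la = dual_eval xi) ->
  forall a xi la, Phiprime X Phi a xi la -> la = dual_eval xi.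
Proof.
move=> graphPhi a xi la Phi'_a.
have C0 : 0 <= cnorm by exact: sumr_ge0.
apply/eqP; rewrite -subr_eq0 -normr_le0; apply/ler_addgt0Pr => e e0; rewrite add0r.
have eps0 : 0 < e / (1 + cnorm) by apply: divr_gt0; lra.
have [a' [b' [z [nu [[_ [_ [xi1 [la1 [eta [mu DPhi]]]]]] [_ [_ [nu_la z_xi]]]]]]]] :=
  Phi'_a _ eps0.
have [Phi1 [Phi2 [zE [nuE _]]]] := DPhi.
have nuL : nu = dual_eval z.
  by rewrite nuE zE dual_evalD -(graphPhi _ _ _ Phi1) -(graphPhi _ _ _ Phi2).
have Lz_xi := dual_eval_near z_xi.
have tri := ler_normD (la - nu) (nu - dual_eval xi); rewrite addrA subrK in tri.
have e_eps : (1 + cnorm) * (e / (1 + cnorm)) = e by rewrite mulrC divfK //; lra.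
rewrite distrC nuL in nu_la; rewrite nuL in tri; nra.
Qed.

Lemma rhoPhi_graph (Phi : fbundle R n q) :
  (forall a xi la, Phi a xi la -> la = dual_eval xi) ->
  forall a xi la, rhoPhi X Phi a xi la -> la = dual_eval xi.
Proof.
move=> graphPhi a xi la [_ [m [cc [w [l [Phi'w [-> ->]]]]]]].
rewrite dual_eval_lincomb; apply: eq_bigr => i _; congr (_ * _).
exact: Phiprime_graph (Phi'w i).
Qed.

Lemma iter_rhoPhi_graph m a xi la :
  iter m (@rhoPhi R n X q) (@Phi0 R n X P q) a xi la -> la = dual_eval xi.
Proof.
elim: m a xi la => [|m IHm] /= a xi la; last exact: rhoPhi_graph.
by move=> [_ [t [-> ->]]]; rewrite dual_eval_delta.
Qed.

Lemma rhoE_lift (E : bundle R n q) (Phi : fbundle R n q) :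
  (forall a xi, E a xi -> Phi a xi (dual_eval xi)) ->
  forall a xi, rhoE X E a xi -> rhoPhi X Phi a xi (dual_eval xi).
Proof.
move=> liftE a xi [Xa [m [cc [w [E'w ->]]]]].
split => //; exists m, cc, w, (fun i => dual_eval (w i)).
split; last by rewrite dual_eval_lincomb.
move=> i eps eps0.
have C0 : 0 <= cnorm by exact: sumr_ge0.
pose e := eps / (1 + cnorm).
have e0 : 0 < e by apply: divr_gt0; lra.
have e_le : e <= eps by rewrite ler_pdivrMr; [nra | lra].
have Ce_lt : cnorm * e < eps by rewrite mulrA ltr_pdivrMr; [nra | lra].
have [a' [b' [z [[Xa' [Xb' [xi1 [eta [E1 [E2 [zE close]]]]]]] [a'a [b'a z_xi]]]]]] :=
  E'w i e e0.
exists a', b', z, (dual_eval z); split.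
  split => //; split => //; exists xi1, (dual_eval xi1), eta, (dual_eval eta).
  by do 2 (split; first exact: liftE); rewrite zE dual_evalD.
do 2 (split; first exact: lt_le_trans e_le).
split; first exact: le_lt_trans (dual_eval_near z_xi) Ce_lt.
by move=> be; exact: lt_le_trans (z_xi be) e_le.
Qed.

Lemma iter_rhoE_lift m a xi :
  iter m (@rhoE R n X q) (@E0 R n X q) a xi ->
  iter m (@rhoPhi R n X q) (@Phi0 R n X P q) a xi (dual_eval xi).
Proof.
elim: m a xi => [|m IHm] /= a xi; last exact: rhoE_lift.
by move=> [Xa [t ->]]; split => //; exists t; rewrite dual_eval_delta.
Qed.

Lemma nabla_polyfun a xi : X a -> tau X q a xi -> nabla X q P a xi (dual_eval xi).
Proof.
move=> Xa /iter_rhoE_lift tau_xi; apply: iter_rhoPhi_mono tau_xi => //.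
by rewrite leq_mul2l ltnW.
Qed.

Lemma nabla_polyfun_eq a xi la : nabla X q P a xi la -> la = dual_eval xi.
Proof. exact: iter_rhoPhi_graph. Qed.

Lemma nabla_polyfun_is_fun : nabla_is_fun X q P.
Proof.
move=> a Xa xi tau_xi; exists (dual_eval xi); split; first exact: nabla_polyfun.
by move=> la /nabla_polyfun_eq.
Qed.
End NablaPolynomial.

Theorem corollary2p4 (R : realType) (n : nat) (X : set 'rV[R]_n)
  (qX : nat -> nat) :
  compact X -> subanalytic X ->
  (forall p, (p <= qX p)%N) ->
  (forall (p : nat) (f : 'rV[R]_n -> R) (q : nat), (qX p <= q)%N ->
     nabla_is_fun X q f ->
     (exists F : 'rV[R]_n -> R, Cs p F /\ forall x, X x -> F x = f x) /\
     (forall a, X a -> nabla_zero_at X q f a ->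
        exists F : 'rV[R]_n -> R, Cs p F /\ flat p F a /\ forall x, X x -> F x = f x)) ->
  forall (s p q : nat), (p <= s)%N -> (qX s <= q)%N ->
    forall (a : 'rV[R]_n) (xi : dual R n p), Tcal X s p a xi -> tau_p X q p a xi.
Proof.
move=> _ _ _ extend s p q ps qs a xi [Xa Tcal_xi].
apply: contrapT; rewrite /tau_p tau_rhoE => /= iotaN.
pose S := Eprime X (iter (2 * rdim n q).-1 (@rhoE R n X q) (@E0 R n X q)) a.
have [c [cS c_iota]] :=
  @separate_from_span R _ S (Defs.iota p q a xi) (fun span => iotaN (conj Xa span)).
pose P := polyfun c (fun b => mval b).
have c_tau xi' : tau X q a xi' -> dual_eval c xi' = 0.
  rewrite tau_rhoE => -[_ [m [cc [w [Sw ->]]]]].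
  by rewrite dual_eval_lincomb big1 // => i _; rewrite /dual_eval (cS _ (Sw i)) mulr0.
have nabla_a0 : nabla_zero_at X q P a.
  by move=> xi' /c_tau c0 la /nabla_polyfun_eq ->.
have [F [CsF [flatF FP]]] := (extend s P q qs (nabla_polyfun_is_fun c)).2 a Xa nabla_a0.
have CsP : Cs s P by exact: Cs_polyfun.
have P_F0 x : X x -> (P \- F) x = 0 by move=> Xx; rewrite /= FP ?subrr.
have := Tcal_xi _ (CsB CsP CsF) P_F0.
rewrite (flat_xi_taylorB _ ps CsP CsF flatF) xi_taylor_polyfun.
by move=> /eqP; rewrite (negbTE c_iota).
Qed.
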